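(* Let $G=(V,E)$ be a directed graph with $n$ vertices and $m$ edges and let $\phi\in(0,1)$. Consider the following procedure: start with $\mathcal{X}=\{V\}$ and $E_{Rest}=\emptyset$; while there is $X\in\mathcal{X}$ and $S\subseteq X$ such that $(S,X\setminus S)$ is a $\phi$-out-sparse cut in $G[X]$ or in $\overleftarrow{G}[X]$, replace $X$ in $\mathcal{X}$ by $S$ and $X\setminus S$, and add to $E_{Rest}$ the smaller of the two edge sets $E_{G[X]}(S,X\setminus S)$ and $E_{G[X]}(X\setminus S,S)$. Then, for every choice of the sparse cuts, the procedure terminates after at most $n-1$ iterations, and its output satisfies: (i) $G[X]$ is a $\phi$-expander for every $X\in\mathcal{X}$; (ii) $|E_{Rest}|\le 2\phi m(\log_2(2m)+1)$; (iii) the graph $G/\{X\}_{X\in\mathcal{X}}\setminus E_{Rest}$ has no directed cycle other than self-loops.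
   Context: Graphs are directed multigraphs (self-loops allowed); $\deg_G(v)$ counts incident edges with a self-loop counting $2$; $\mathrm{vol}_G(S)=\sum_{v\in S}\deg_G(v)$; $E_G(A,B)$ is the set of edges with tail in $A$ and head in $B$; $\overleftarrow{G}$ is $G$ with edges reversed; $G[X]$ is the induced subgraph; $G/\{X\}_{X\in\mathcal{X}}$ is $G$ with each $X$ contracted to a single vertex. In a graph $H$ on vertex set $X$, a cut $(S,X\setminus S)$ is $\phi$-out-sparse if $\mathrm{vol}_H(S)\le\mathrm{vol}_H(X\setminus S)$ and $|E_H(S,X\setminus S)|<\phi\,\mathrm{vol}_H(S)$; $H$ is a $\phi$-expander if neither $H$ nor $\overleftarrow{H}$ has a $\phi$-out-sparse cut. *)

From HB Require Import structures.
From mathcomp Require Import all_boot all_order all_algebra.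
From mathcomp Require Import all_classical all_reals exp.
Set Implicit Arguments. Unset Strict Implicit. Unset Printing Implicit Defensive.
Import Order.TTheory GRing.Theory Num.Theory.
Local Open Scope ring_scope.

(* A directed multigraph: finite vertex type V, finite edge type E, each edge
   e has tail tl e and head hd e (self-loops and parallel edges allowed).
   The reversed graph is obtained by swapping tl and hd. *)

Section Graph.
Variables (V E : finType) (tl hd : E -> V).

Definition inducedE (X : {set V}) : {set E} :=
  [set e | (tl e \in X) && (hd e \in X)].

(* deg_{G[X]}(v): incident edges of G[X], a self-loop counting twice. *)
Definition deg_in (X : {set V}) (v : V) : nat :=
  #|[set e in inducedE X | tl e == v]| + #|[set e in inducedE X | hd e == v]|.

Definition vol_in (X S : {set V}) : nat := \sum_(v in S) deg_in X v.

Definition cutE (X A B : {set V}) : {set E} :=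
  [set e in inducedE X | (tl e \in A) && (hd e \in B)].

Definition out_sparse (R : realType) (phi : R) (X S : {set V}) : Prop :=
  [/\ S \subset X,
      (vol_in X S <= vol_in X (X :\: S))%N
    & (#|cutE X S (X :\: S)|%:R < phi * (vol_in X S)%:R)].

End Graph.

Definition expander (R : realType) (V E : finType) (tl hd : E -> V)
    (phi : R) (X : {set V}) : Prop :=
  forall S : {set V}, S \subset X ->
    ~ out_sparse tl hd phi X S /\ ~ out_sparse hd tl phi X S.

(* State of the procedure: (the family \mathcal{X}, E_Rest). *)
Definition state (V E : finType) := ({set {set V}} * {set E})%type.

Definition step (R : realType) (V E : finType) (tl hd : E -> V) (phi : R)
    (s s' : state V E) : Prop :=
  exists (X S : {set V}),
    [/\ X \in s.1,
        out_sparse tl hd phi X S \/ out_sparse hd tl phi X S,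
        s'.1 = (s.1 :\ X) :|: [set S; X :\: S]
      & (let F1 := cutE tl hd X S (X :\: S) in
         let F2 := cutE tl hd X (X :\: S) S in
         (#|F1| <= #|F2|)%N /\ s'.2 = s.2 :|: F1
         \/ (#|F2| <= #|F1|)%N /\ s'.2 = s.2 :|: F2)].

(* run s0 [:: s1; ...; sk]: s0 -> s1 -> ... -> sk are k successive iterations. *)
Fixpoint run (R : realType) (V E : finType) (tl hd : E -> V) (phi : R)
    (s0 : state V E) (l : seq (state V E)) : Prop :=
  match l with
  | [::] => True
  | s1 :: l' => step tl hd phi s0 s1 /\ run tl hd phi s1 l'
  end.

Definition init_state (V E : finType) : state V E := ([set [set: V]], finset.set0).

Definition terminal (R : realType) (V E : finType) (tl hd : E -> V) (phi : R)
    (s : state V E) : Prop :=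
  ~ exists X S : {set V}, X \in s.1 /\
      (out_sparse tl hd phi X S \/ out_sparse hd tl phi X S).

(* Edge relation of G / {X}_{X in P} \ Er between distinct contracted vertices
   (self-loops of the contracted graph are ignored). *)
Definition qedge (V E : finType) (tl hd : E -> V) (P : {set {set V}}) (Er : {set E})
    : rel {set V} :=
  fun B1 B2 => [&& B1 \in P, B2 \in P, B1 != B2 &
    [exists e, [&& e \notin Er, tl e \in B1 & hd e \in B2]]].

Definition no_nontrivial_cycle (V E : finType) (tl hd : E -> V)
    (P : {set {set V}}) (Er : {set E}) : Prop :=
  forall B1 B2 : {set V}, qedge tl hd P Er B1 B2 -> ~~ connect (qedge tl hd P Er) B2 B1.

Definition log2 (R : realType) (x : R) : R := ln x / ln 2.

From HB Require Import structures.
From mathcomp Require Import all_boot all_order all_algebra.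
From mathcomp Require Import all_classical all_reals exp.
From mathcomp Require Import lra zify.
Set Implicit Arguments. Unset Strict Implicit. Unset Printing Implicit Defensive.
Import Order.TTheory GRing.Theory Num.Theory.
Local Open Scope ring_scope.

(* Termination: the number of parts grows at every split, so
   [\sum_(B in P) (#|B| - 1)], which starts at [#|V| - 1], strictly decreases.
   Size of E_Rest: with [f n := n log2 n], the quantity
   [#|E_Rest| + phi * \sum_(B in P) f (vol_{G[B]} B)] never increases.  A split
   of [X] along a sparse cut [S] adds fewer than [phi * vol S] edges, while the
   superadditivity [f a + f b + a <= f (a + b)] for [a <= b] and the inequality
   [vol_{G[S]} S <= vol_{G[X]} S] make the potential drop by at least
   [phi * vol S].  It starts at [phi * f (2m)].
   Acyclicity: the contracted graph always carries a rank function increasing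
   along its edges.  When [X] is split into [hi] and [lo] and all edges from
   [hi] to [lo] go to E_Rest, rank [hi] just above and [lo] just below the old
   rank of [X] after doubling all ranks. *)

Lemma ln2_gt0 (R : realType) : 0 < ln (2 : R).
Proof. by apply: ln_gt0; rewrite ltr1n. Qed.

Lemma log2_ge0 (R : realType) (x : R) : 1 <= x -> 0 <= log2 x.
Proof. by move=> x_ge1; apply: divr_ge0; [apply: ln_ge0 | apply/ltW/ln2_gt0]. Qed.

Lemma ler_log2 (R : realType) (x y : R) : 0 < x -> x <= y -> log2 x <= log2 y.
Proof.
move=> x_gt0 le_xy; have y_gt0 := lt_le_trans x_gt0 le_xy.
by rewrite /log2 ler_pM2r ?invr_gt0 ?ln2_gt0 // ler_ln ?posrE.
Qed.

Lemma log2M2 (R : realType) (x : R) : 0 < x -> log2 (2 * x) = log2 x + 1.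
Proof.
move=> x_gt0; rewrite /log2 lnM ?posrE // mulrDl divff 1?addrC //.
exact: lt0r_neq0 (ln2_gt0 R).
Qed.

Definition nlog2 (R : realType) (n : nat) : R := n%:R * log2 (n%:R : R).

Lemma nlog2_ge0 (R : realType) (n : nat) : 0 <= nlog2 R n.
Proof.
case: n => [|n]; first by rewrite /nlog2 mul0r.
by rewrite mulr_ge0 // log2_ge0 // ler1n.
Qed.

Lemma nlog2_le (R : realType) (m n : nat) : (m <= n)%N -> nlog2 R m <= nlog2 R n.
Proof.
case: m => [|m] le_mn; first by rewrite /nlog2 mul0r nlog2_ge0.
apply: ler_pM; rewrite ?ler0n ?ler_nat //; first by apply: log2_ge0; rewrite ler1n.
by apply: ler_log2; rewrite ?ltr0n ?ler_nat.
Qed.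

Lemma nlog2_superadditive (R : realType) (a b : nat) : (0 < a)%N -> (a <= b)%N ->
  nlog2 R a + nlog2 R b + a%:R <= nlog2 R (a + b).
Proof.
move=> a_gt0 le_ab; have b_gt0 := leq_trans a_gt0 le_ab.
have log_a : log2 (a%:R : R) + 1 <= log2 (a + b)%:R.
  by rewrite -log2M2 ?ltr0n // ler_log2 ?mulr_gt0 ?ltr0n // -natrM ler_nat; lia.
have log_b : log2 (b%:R : R) <= log2 (a + b)%:R by rewrite ler_log2 ?ltr0n ?ler_nat ?leq_addl.
rewrite /nlog2; set L := log2 (a + b)%:R.
have : (a + b)%:R * L = a%:R * L + b%:R * L :> R by rewrite natrD mulrDl.
have : a%:R * log2 a%:R + a%:R <= a%:R * L :> R.
  by rewrite -[X in _ + X]mulr1 -mulrDr ler_pM2l ?ltr0n.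
have : b%:R * log2 b%:R <= b%:R * L :> R by rewrite ler_pM2l ?ltr0n.
lra.
Qed.

Lemma ltn_double_addb (m n : nat) (b c : bool) : (m < n)%N -> (2 * m + b < 2 * n + c)%N.
Proof. by case: b; case: c => /=; lia. Qed.

Lemma leq_sum_setU (T : finType) (A B : {set T}) (F : T -> nat) :
  (\sum_(i in A :|: B) F i <= \sum_(i in A) F i + \sum_(i in B) F i)%N.
Proof.
rewrite (big_setID A) /= finset.setUK finset.setDUl finset.setDv finset.set0U.
by rewrite leq_add2l [X in (_ <= X)%N](big_setID A) leq_addl.
Qed.

Lemma ler_sum_setU (R : numDomainType) (T : finType) (A B : {set T}) (F : T -> R) :
  (forall i, 0 <= F i) ->
  \sum_(i in A :|: B) F i <= \sum_(i in A) F i + \sum_(i in B) F i.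
Proof.
move=> F_ge0; rewrite (big_setID A) /= finset.setUK finset.setDUl finset.setDv.
by rewrite finset.set0U lerD2l [X in _ <= X](big_setID A) lerDr sumr_ge0.
Qed.

Section Reversal.
Variables (V E : finType) (tl hd : E -> V).

Lemma inducedE_rev X : inducedE hd tl X = inducedE tl hd X.
Proof. by apply/setP => e; rewrite !inE andbC. Qed.

Lemma vol_in_rev X S : vol_in hd tl X S = vol_in tl hd X S.
Proof. by apply: eq_bigr => v _; rewrite /deg_in inducedE_rev addnC. Qed.

Lemma cutE_rev X S T : cutE hd tl X S T = cutE tl hd X T S.
Proof. by apply/setP => e; rewrite /cutE inducedE_rev !inE [(hd e \in S) && _]andbC. Qed.

End Reversal.

Section Volume.
Variables (V E : finType) (tl hd : E -> V).

Lemma vol_in_subset (S X : {set V}) : S \subset X ->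
  (vol_in tl hd S S <= vol_in tl hd X S)%N.
Proof.
move=> sSX; apply: leq_sum => v _; rewrite leq_add // subset_leq_card //;
  apply/fintype.subsetP => e; rewrite !inE => /andP [/andP [tS hS] ->];
  by rewrite (fintype.subsetP sSX _ tS) (fintype.subsetP sSX _ hS).
Qed.

Lemma vol_in_setID (S X : {set V}) : S \subset X ->
  vol_in tl hd X X = (vol_in tl hd X S + vol_in tl hd X (X :\: S))%N.
Proof. by move=> /finset.setIidPr sSX; rewrite /vol_in (big_setID S) /= sSX. Qed.

Lemma vol_in_gt0_card (X S : {set V}) : (0 < vol_in tl hd X S)%N -> (0 < #|S|)%N.
Proof. by rewrite !lt0n; apply: contra => /eqP/cards0_eq ->; rewrite /vol_in big_set0. Qed.

Lemma vol_in_setT : vol_in tl hd [set: V] [set: V] = (2 * #|E|)%N.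
Proof.
have deg_sum (f : E -> V) :
    (\sum_v #|[set e in inducedE tl hd [set: V] | f e == v]| = #|E|)%N.
  rewrite -[RHS]sum1_card (partition_big f xpredT) //=.
  by apply: eq_bigr => v _; rewrite sum1dep_card; apply: eq_card => e; rewrite !inE.
rewrite /vol_in (eq_bigl xpredT) => [|v]; last by rewrite inE.
by rewrite big_split /= !deg_sum mul2n addnn.
Qed.

End Volume.

Section Procedure.
Variables (R : realType) (V E : finType) (tl hd : E -> V) (phi : R).

Local Notation step := (step tl hd phi).
Local Notation run := (run tl hd phi).
Local Notation vol := (vol_in tl hd).

Lemma run_invariant (P : state V E -> Prop) s0 l :
  (forall s s', step s s' -> P s -> P s') -> P s0 -> run s0 l -> P (last s0 l).
Proof. by move=> stepP; elim: l s0 => //= s1 l IH s0 P0 [/stepP/(_ P0) P1 /IH]; apply. Qed.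

Lemma run_size_le (f : state V E -> nat) s0 l :
  (forall s s', step s s' -> (f s' < f s)%N) -> run s0 l ->
  (size l + f (last s0 l) <= f s0)%N.
Proof.
move=> f_lt; elim: l s0 => //= s1 l IH s0 [/f_lt lt10 /IH].
by move: lt10; lia.
Qed.

Lemma step_split (s s' : state V E) : step s s' ->
  exists (X S : {set V}) (F : {set E}),
   [/\ X \in s.1, S \subset X, (0 < vol X S)%N,
       (vol X S <= vol X (X :\: S))%N &
       #|F|%:R < phi * (vol X S)%:R] /\
   [/\ s'.1 = (s.1 :\ X) :|: [set S; X :\: S],
       s'.2 = s.2 :|: F
     & F = cutE tl hd X S (X :\: S) \/ F = cutE tl hd X (X :\: S) S].
Proof.
case=> X [S [X_in sparse split_s' rest_s']].
have vol_gt0 (c a : nat) : c%:R < phi * a%:R -> (0 < a)%N.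
  by rewrite lt0n; apply: contraTneq => ->; rewrite mulr0 ltNge ler0n.
have [sSX le_vol cut_lt] : [/\ S \subset X, (vol X S <= vol X (X :\: S))%N &
   #|cutE tl hd X S (X :\: S)|%:R < phi * (vol X S)%:R \/
   #|cutE tl hd X (X :\: S) S|%:R < phi * (vol X S)%:R].
  case: sparse => -[sSX]; rewrite ?(vol_in_rev tl hd) ?(cutE_rev tl hd).
    by split=> //; left.
  by split=> //; right.
have vol_S_gt0 : (0 < vol X S)%N by case: cut_lt => /vol_gt0.
case: rest_s' => -[le_cut ->].
- exists X, S, (cutE tl hd X S (X :\: S)); split; split=> //; last by left.
  by case: cut_lt => // /(le_lt_trans _); apply; rewrite ler_nat.
- exists X, S, (cutE tl hd X (X :\: S) S); split; split=> //; last by right.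
  by case: cut_lt => // /(le_lt_trans _)-> //; rewrite ler_nat.
Qed.

Definition excess (P : {set {set V}}) : nat := \sum_(B in P) (#|B| - 1).

Lemma excess_split (P : {set {set V}}) (X S : {set V}) : X \in P -> S \subset X ->
  (0 < #|S|)%N -> (0 < #|X :\: S|)%N ->
  (excess ((P :\ X) :|: [set S; X :\: S]) < excess P)%N.
Proof.
move=> X_in sSX S_gt0 XS_gt0; rewrite /excess (big_setD1 X X_in) /= addnC.
apply: leq_ltn_trans (leq_sum_setU _ _ _) _; rewrite ltn_add2l.
apply: leq_ltn_trans (leq_sum_setU _ _ _) _; rewrite !big_set1.
by have := cardsID S X; rewrite (finset.setIidPr sSX); lia.
Qed.

Lemma step_excess (s s' : state V E) : step s s' -> (excess s'.1 < excess s.1)%N.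
Proof.
move=> /step_split [X [S [F [[X_in sSX vol_gt0 le_vol _] [-> _ _]]]]].
apply: excess_split => //; first exact: vol_in_gt0_card vol_gt0.
exact: vol_in_gt0_card (leq_trans vol_gt0 le_vol).
Qed.

Lemma excess_init : excess (init_state V E).1 = (#|V| - 1)%N.
Proof. by rewrite /excess big_set1 cardsT. Qed.

Definition potential (P : {set {set V}}) : R := \sum_(B in P) nlog2 R (vol B B).

Lemma potential_split (P : {set {set V}}) (X S : {set V}) : X \in P -> S \subset X ->
  (0 < vol X S)%N -> (vol X S <= vol X (X :\: S))%N ->
  potential ((P :\ X) :|: [set S; X :\: S]) + (vol X S)%:R <= potential P.
Proof.
move=> X_in sSX vol_gt0 le_vol.
have f_ge0 (B : {set V}) : 0 <= nlog2 R (vol B B) by apply: nlog2_ge0.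
have := ler_sum_setU (P :\ X) [set S; X :\: S] f_ge0.
have := ler_sum_setU [set S] [set X :\: S] f_ge0; rewrite !big_set1.
have := nlog2_le R (vol_in_subset tl hd sSX).
have := nlog2_le R (vol_in_subset tl hd (subsetDl X S)).
have := nlog2_superadditive R vol_gt0 le_vol; rewrite -vol_in_setID //.
by rewrite /potential (big_setD1 X X_in) /=; lra.
Qed.

Lemma step_potential (s s' : state V E) : 0 <= phi -> step s s' ->
  #|s'.2|%:R + phi * potential s'.1 <= #|s.2|%:R + phi * potential s.1.
Proof.
move=> phi_ge0 /step_split [X [S [F [[X_in sSX vol_gt0 le_vol F_lt] [-> -> _]]]]].
have := ler_wpM2l phi_ge0 (potential_split X_in sSX vol_gt0 le_vol).
have : #|s.2 :|: F|%:R <= #|s.2|%:R + #|F|%:R :> R.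
  by rewrite -natrD ler_nat leq_card_setU.
by move: F_lt; rewrite mulrDr; lra.
Qed.

Lemma run_rest_card_le l : 0 <= phi -> run (init_state V E) l ->
  #|(last (init_state V E) l).2|%:R <= phi * nlog2 R (2 * #|E|).
Proof.
move=> phi_ge0 run_l.
have potential_ge0 (P : {set {set V}}) : 0 <= potential P.
  by apply: sumr_ge0 => B _; apply: nlog2_ge0.
pose inv (s : state V E) :=
  #|s.2|%:R + phi * potential s.1 <= phi * nlog2 R (2 * #|E|).
have : inv (last (init_state V E) l).
  apply: (run_invariant (P := inv) _ _ run_l) => [s s' /(step_potential phi_ge0)|].
    exact: le_trans.
  by rewrite /inv /potential big_set1 vol_in_setT cards0 add0r.
rewrite /inv; set s := last _ _.
by have := mulr_ge0 phi_ge0 (potential_ge0 s.1); lra.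
Qed.

Definition ranked (P : {set {set V}}) (Er : {set E}) : Prop :=
  exists r : {set V} -> nat, forall B1 B2, qedge tl hd P Er B1 B2 -> (r B1 < r B2)%N.

Lemma ranked_no_nontrivial_cycle (P : {set {set V}}) (Er : {set E}) :
  ranked P Er -> no_nontrivial_cycle tl hd P Er.
Proof.
move=> [r r_lt] B1 B2 edge12; apply/negP => /connectP [p p_path B1_last].
have r_path x q : path (qedge tl hd P Er) x q -> (r x <= r (last x q))%N.
  elim: q x => //= y q IH x /andP [/r_lt/ltnW le_xy /IH]; exact: leq_trans.
by have := r_path _ _ p_path; rewrite -B1_last; have := r_lt _ _ edge12; lia.
Qed.

Lemma ranked_split (P : {set {set V}}) (Er Er' : {set E}) (X hi lo : {set V}) :
  X \in P -> hi \subset X -> lo \subset X -> Er \subset Er' ->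
  (forall e, tl e \in hi -> hd e \in lo -> e \in Er') ->
  ranked P Er -> ranked ((P :\ X) :|: [set hi; lo]) Er'.
Proof.
move=> X_in shi slo sEr hi_lo [r r_lt].
pose old (B : {set V}) : {set V} := if (B == hi) || (B == lo) then X else B.
exists (fun B => 2 * r (old B) + (B == hi))%N.
move=> B1 B2 /and4P [B1_in B2_in B12 /existsP [e /and3P [eNEr' t1 h2]]].
have old_in B : B \in (P :\ X) :|: [set hi; lo] ->
    old B \in P /\ (old B == X) = (B == hi) || (B == lo).
  rewrite /old; case: ifP => [_ _ | hilo]; first by rewrite X_in eqxx.
  by rewrite !inE hilo orbF => /andP [/negbTE -> ->].
have old_sub (B : {set V}) : B \subset old B.
  by rewrite /old; case: ifP => // /orP [] /eqP ->.
have old_id (B : {set V}) : ~~ ((B == hi) || (B == lo)) -> old B = B.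
  by rewrite /old => /negbTE ->.
have [in1 eqX1] := old_in _ B1_in; have [in2 eqX2] := old_in _ B2_in.
have [old12 | old12] := eqVneq (old B1) (old B2).
  have hilo12 : ((B1 == hi) || (B1 == lo)) = ((B2 == hi) || (B2 == lo)).
    by rewrite -eqX1 -eqX2 old12.
  have hilo1 : (B1 == hi) || (B1 == lo).
    apply/negPn/negP => nhilo1; have nhilo2 := nhilo1; rewrite hilo12 in nhilo2.
    by move/eqP: B12; apply; rewrite -(old_id _ nhilo1) -(old_id _ nhilo2) old12.
  case/orP: hilo1 (hilo1) => /eqP E1; rewrite hilo12 => /orP [] /eqP E2; subst B1 B2.
  - by rewrite eqxx in B12.
  - by rewrite hi_lo in eNEr'.
  - by rewrite old12 eqxx (negbTE B12) ltn_add2l.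
  - by rewrite eqxx in B12.
have : (r (old B1) < r (old B2))%N.
  apply: r_lt; rewrite /qedge in1 in2 old12; apply/existsP; exists e.
  rewrite (fintype.subsetP (old_sub _) _ t1) (fintype.subsetP (old_sub _) _ h2) !andbT.
  by apply: contraNN eNEr'; apply: (fintype.subsetP sEr).
exact: ltn_double_addb.
Qed.

Lemma ranked_set1 (B : {set V}) (Er : {set E}) : ranked [set B] Er.
Proof. by exists (fun _ => 0%N) => B1 B2 /and4P [/set1P -> /set1P -> /eqP]. Qed.

Lemma step_ranked (s s' : state V E) : step s s' -> ranked s.1 s.2 -> ranked s'.1 s'.2.
Proof.
move=> /step_split [X [S [F [[X_in sSX _ _ _] [-> -> F_cut]]]]].
have sF : s.2 \subset s.2 :|: F by apply: finset.subsetUl.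
case: F_cut => F_cut.
- apply: (@ranked_split _ _ _ X S (X :\: S) X_in sSX (subsetDl X S) sF) => e tS hXS.
  apply/finset.setUP; right; rewrite F_cut !inE tS (fintype.subsetP sSX _ tS).
  by move: hXS; rewrite !inE => /andP [-> ->].
- rewrite [[set S; _]]finset.setUC.
  apply: (@ranked_split _ _ _ X (X :\: S) S X_in (subsetDl X S) sSX sF) => e tXS hS.
  apply/finset.setUP; right; rewrite F_cut !inE hS (fintype.subsetP sSX _ hS).
  by move: tXS; rewrite !inE => /andP [-> ->].
Qed.

End Procedure.

Theorem mainTheorem4 (R : realType) (V E : finType) (tl hd : E -> V) (phi : R)
    (hphi0 : 0 < phi) (hphi1 : phi < 1) :
  (forall l : seq (state V E), run tl hd phi (init_state V E) l ->
     (size l <= #|V| - 1)%N)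
  /\
  (forall l : seq (state V E), run tl hd phi (init_state V E) l ->
     let s := last (init_state V E) l in
     terminal tl hd phi s ->
     [/\ (forall X, X \in s.1 -> expander tl hd phi X),
         (#|s.2|%:R <= 2 * phi * #|E|%:R * (log2 (2 * #|E|%:R) + 1))
       & no_nontrivial_cycle tl hd s.1 s.2]).
Proof.
split=> l run_l.
  have := run_size_le (@step_excess R V E tl hd phi) run_l.
  by rewrite excess_init; apply: leq_trans; apply: leq_addr.
move=> s terminal_s; split.
- move=> X X_in S sSX; split=> sparse; apply: terminal_s; exists X, S; tauto.
- have := run_rest_card_le (ltW hphi0) run_l; rewrite /nlog2 natrM => le_rest.
  have : 0 <= phi * #|E|%:R by rewrite mulr_ge0 // ltW.
  nra.
- apply: ranked_no_nontrivial_cycle; rewrite /s.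
  apply: (run_invariant (P := fun s => ranked tl hd s.1 s.2) _ _ run_l).
    exact: (@step_ranked R V E tl hd phi).
  exact: (ranked_set1 tl hd [set: V] finset.set0).
Qed.
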